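(* For every partial trace $T$ of iTML, the set $\mathrm{Prefix}(T) = \{T' \mid T' \sqsubseteq T\}$, ordered by $\sqsubseteq$, is a complete lattice.
   Context: Partial expressions $e$ of iTML are built from $x \mid () \mid \mathsf{inl}\,e \mid \mathsf{inr}\,e \mid (e_1,e_2) \mid \mathsf{fst}\,e \mid \mathsf{snd}\,e \mid \mathsf{fun}\,f(x).M \mid \Box$ (with $M$ partial computations, $\Box$ a hole), ordered by the least order $\sqsubseteq$ with $\Box\sqsubseteq t$ that is closed under constructors componentwise. Outcomes $k ::= \mathsf{val} \mid \mathsf{exn}$; $\ell$ ranges over store locations and $\mathcal{L}$ over finite sets of locations. Partial traces: $T ::= \mathsf{return}\,e \mid \mathsf{let_F}(T) \mid \mathsf{let_S}(T_1, x.T_2) \mid \mathsf{app}(e_1,e_2,f.x.T) \mid \mathsf{caseL}(e,x.T,y) \mid \mathsf{caseR}(e,x,y.T) \mid \mathsf{raise}\,e \mid \mathsf{try_S}(T) \mid \mathsf{try_F}(T_1,x.T_2) \mid \mathsf{ref}_\ell\,e \mid e_1 :=_\ell e_2 \mid !_\ell\,e \mid \Box^{k}_{\mathcal{L}}$. The set $\mathsf{writes}(T)$: $\mathsf{writes}(\Box^k_{\mathcal{L}})=\mathcal{L}$; $\emptyset$ for $\mathsf{return}\,e$, $\mathsf{raise}\,e$ and $!_\ell\,e$; $\{\ell\}$ for $\mathsf{ref}_\ell\,e$ and $e_1:=_\ell e_2$; $\mathsf{writes}(T_1)\cup\mathsf{writes}(T_2)$ for $\mathsf{let_S}(T_1,x.T_2)$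 and $\mathsf{try_F}(T_1,x.T_2)$; $\mathsf{writes}(T)$ for $\mathsf{let_F}(T)$, $\mathsf{try_S}(T)$, $\mathsf{app}(e_1,e_2,f.x.T)$, $\mathsf{caseL}(e,x.T,y)$, $\mathsf{caseR}(e,x,y.T)$. The outcome $\mathsf{outcome}(T)$: $k$ for $\Box^k_{\mathcal{L}}$; $\mathsf{val}$ for $\mathsf{return}\,e$, $\mathsf{try_S}(T)$, $\mathsf{ref}_\ell\,e$, $e_1:=_\ell e_2$, $!_\ell\,e$; $\mathsf{exn}$ for $\mathsf{let_F}(T)$ and $\mathsf{raise}\,e$; $\mathsf{outcome}(T_2)$ for $\mathsf{let_S}(T_1,x.T_2)$ and $\mathsf{try_F}(T_1,x.T_2)$; $\mathsf{outcome}(T)$ for $\mathsf{app}(\ldots,T)$, $\mathsf{caseL}(e,x.T,y)$, $\mathsf{caseR}(e,x,y.T)$. The order $\sqsubseteq$ on traces is the least relation containing $\Box^{k}_{\mathcal{L}} \sqsubseteq T$ whenever $\mathsf{writes}(T)=\mathcal{L}$ and $\mathsf{outcome}(T)=k$, and closed under each trace constructor componentwise (with expression components compared by $\sqsubseteq$ on expressions and the labels $\ell$, $x,y,f$ identical), e.g. $\mathsf{let_S}(T_1,x.T_2)\sqsubseteq\mathsf{let_S}(T_1',x.T_2')$ iff $T_i\sqsubseteq T_i'$, and $e_1 :=_\ell e_2 \sqsubseteq e_1' :=_\ell e_2'$ iff $e_i\sqsubseteq e_i'$. There is no universal least trace. *)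

From mathcomp Require Import all_boot finmap.
Set Implicit Arguments. Unset Strict Implicit. Unset Printing Implicit Defensive.

Definition var := nat.
Definition loc := nat.

Inductive expr : Type :=
| EVar  : var -> expr
| EUnit : expr
| EInl  : expr -> expr
| EInr  : expr -> expr
| EPair : expr -> expr -> expr
| EFst  : expr -> expr
| ESnd  : expr -> expr
| EFun  : var -> var -> comp -> expr
| EHole : expr
with comp : Type :=
| CReturn : expr -> comp
| CLet    : comp -> var -> comp -> comp
| CApp    : expr -> expr -> comp
| CCase   : expr -> var -> comp -> var -> comp -> comp
| CRaise  : expr -> comp
| CTry    : comp -> var -> comp -> comp
| CRef    : expr -> comp
| CAssign : expr -> expr -> comp
| CDeref  : expr -> comp
| CHole   : comp.

Inductive ele : expr -> expr -> Prop :=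
| ele_hole e : ele EHole e
| ele_var x : ele (EVar x) (EVar x)
| ele_unit : ele EUnit EUnit
| ele_inl e e' : ele e e' -> ele (EInl e) (EInl e')
| ele_inr e e' : ele e e' -> ele (EInr e) (EInr e')
| ele_pair e1 e2 e1' e2' : ele e1 e1' -> ele e2 e2' -> ele (EPair e1 e2) (EPair e1' e2')
| ele_fst e e' : ele e e' -> ele (EFst e) (EFst e')
| ele_snd e e' : ele e e' -> ele (ESnd e) (ESnd e')
| ele_fun f x M M' : cle M M' -> ele (EFun f x M) (EFun f x M')
with cle : comp -> comp -> Prop :=
| cle_hole M : cle CHole M
| cle_return e e' : ele e e' -> cle (CReturn e) (CReturn e')
| cle_let M1 M2 M1' M2' x : cle M1 M1' -> cle M2 M2' -> cle (CLet M1 x M2) (CLet M1' x M2')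
| cle_app e1 e2 e1' e2' : ele e1 e1' -> ele e2 e2' -> cle (CApp e1 e2) (CApp e1' e2')
| cle_case e e' x M1 M1' y M2 M2' : ele e e' -> cle M1 M1' -> cle M2 M2' ->
    cle (CCase e x M1 y M2) (CCase e' x M1' y M2')
| cle_raise e e' : ele e e' -> cle (CRaise e) (CRaise e')
| cle_try M1 M2 M1' M2' x : cle M1 M1' -> cle M2 M2' -> cle (CTry M1 x M2) (CTry M1' x M2')
| cle_ref e e' : ele e e' -> cle (CRef e) (CRef e')
| cle_assign e1 e2 e1' e2' : ele e1 e1' -> ele e2 e2' -> cle (CAssign e1 e2) (CAssign e1' e2')
| cle_deref e e' : ele e e' -> cle (CDeref e) (CDeref e').

Inductive outcome := Val | Exn.

Inductive trace : Type :=
| TReturn : expr -> trace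
| TLetF   : trace -> trace
| TLetS   : trace -> var -> trace -> trace
| TApp    : expr -> expr -> var -> var -> trace -> trace
| TCaseL  : expr -> var -> trace -> var -> trace
| TCaseR  : expr -> var -> var -> trace -> trace
| TRaise  : expr -> trace
| TTryS   : trace -> trace
| TTryF   : trace -> var -> trace -> trace
| TRef    : loc -> expr -> trace
| TAssign : loc -> expr -> expr -> trace
| TDeref  : loc -> expr -> trace
| TBox    : outcome -> {fset loc} -> trace.

Local Open Scope fset_scope.

Fixpoint writes (T : trace) : {fset loc} :=
  match T with
  | TBox _ L => L
  | TReturn _ | TRaise _ | TDeref _ _ => fset0
  | TRef l _ | TAssign l _ _ => [fset l]
  | TLetS T1 _ T2 | TTryF T1 _ T2 => writes T1 `|` writes T2
  | TLetF T | TTryS T | TApp _ _ _ _ T | TCaseL _ _ T _ | TCaseR _ _ _ T => writes T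
  end.

Fixpoint toutcome (T : trace) : outcome :=
  match T with
  | TBox k _ => k
  | TReturn _ | TTryS _ | TRef _ _ | TAssign _ _ _ | TDeref _ _ => Val
  | TLetF _ | TRaise _ => Exn
  | TLetS _ _ T2 | TTryF _ _ T2 => toutcome T2
  | TApp _ _ _ _ T | TCaseL _ _ T _ | TCaseR _ _ _ T => toutcome T
  end.

Inductive tle : trace -> trace -> Prop :=
| tle_box k L T : writes T = L -> toutcome T = k -> tle (TBox k L) T
| tle_return e e' : ele e e' -> tle (TReturn e) (TReturn e')
| tle_letF T T' : tle T T' -> tle (TLetF T) (TLetF T')
| tle_letS T1 T2 T1' T2' x : tle T1 T1' -> tle T2 T2' -> tle (TLetS T1 x T2) (TLetS T1' x T2')
| tle_app e1 e2 e1' e2' f x T T' : ele e1 e1' -> ele e2 e2' -> tle T T' ->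
    tle (TApp e1 e2 f x T) (TApp e1' e2' f x T')
| tle_caseL e e' x T T' y : ele e e' -> tle T T' -> tle (TCaseL e x T y) (TCaseL e' x T' y)
| tle_caseR e e' x y T T' : ele e e' -> tle T T' -> tle (TCaseR e x y T) (TCaseR e' x y T')
| tle_raise e e' : ele e e' -> tle (TRaise e) (TRaise e')
| tle_tryS T T' : tle T T' -> tle (TTryS T) (TTryS T')
| tle_tryF T1 T2 T1' T2' x : tle T1 T1' -> tle T2 T2' -> tle (TTryF T1 x T2) (TTryF T1' x T2')
| tle_ref l e e' : ele e e' -> tle (TRef l e) (TRef l e')
| tle_assign l e1 e2 e1' e2' : ele e1 e1' -> ele e2 e2' -> tle (TAssign l e1 e2) (TAssign l e1' e2')
| tle_deref l e e' : ele e e' -> tle (TDeref l e) (TDeref l e').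

Definition Prefix (T : trace) : trace -> Prop := fun T' => tle T' T.

Definition is_lub {A} (le : A -> A -> Prop) (P S : A -> Prop) (u : A) : Prop :=
  P u /\ (forall s, S s -> le s u) /\
  (forall v, P v -> (forall s, S s -> le s v) -> le u v).

Definition is_glb {A} (le : A -> A -> Prop) (P S : A -> Prop) (l : A) : Prop :=
  P l /\ (forall s, S s -> le l s) /\
  (forall v, P v -> (forall s, S s -> le v s) -> le v l).

Definition complete_lattice {A} (le : A -> A -> Prop) (P : A -> Prop) : Prop :=
  [/\ (forall a, P a -> le a a),
      (forall a b, P a -> P b -> le a b -> le b a -> a = b),
      (forall a b c, P a -> P b -> P c -> le a b -> le b c -> le a c) &
      (forall S : A -> Prop, (forall s, S s -> P s) ->
         (exists u, is_lub le P S u) /\ (exists l, is_glb le P S l))].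

(* Two prefixes of T with a common upper bound have a least upper bound, obtained
   by overlaying them node by node (a box gives way to whatever the other side has
   there).  The number of non-hole nodes strictly increases along the prefix order
   and is bounded on Prefix(T), whose least element is the box carrying the writes
   and outcome of T.  Hence among the lower bounds in Prefix(T) of a set S there is
   one of maximal size, and joining it with any other lower bound cannot enlarge
   it, so it is the greatest lower bound.  Least upper bounds are the greatest lower
   bounds of the sets of upper bounds. *)

From Pilot Require Import Defs.
From mathcomp Require Import all_boot finmap zify.
From Stdlib Require Import Classical.
Set Implicit Arguments. Unset Strict Implicit. Unset Printing Implicit Defensive.

Lemma ex_maximizer (X : Type) (Q : X -> Prop) (f : X -> nat) (N : nat) :
  (forall x, Q x -> f x <= N) -> forall x0, Q x0 ->
  exists2 x, Q x & forall y, Q y -> f y <= f x.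
Proof.
move=> bounded x0; have [k] : exists k, N - f x0 <= k by exists (N - f x0).
elim: k x0 => [|k IHk] x Hk Qx.
  by exists x => // y Qy; have := bounded y Qy; lia.
have [x_max|] := classic (forall y, Q y -> f y <= f x); first by exists x.
move=> /not_all_ex_not [y /(imply_to_and (Q y)) [Qy lt_xy]].
by apply: (IHk y) => //; have := bounded y Qy; lia.
Qed.

Section SizeBoundedCompleteLattice.

Variables (A : Type) (le : A -> A -> Prop) (size : A -> nat).
Variables (join : A -> A -> A) (bot top : A).

Hypothesis le_refl : forall a, le a a.
Hypothesis le_trans : forall a b c, le a b -> le b c -> le a c.
Hypothesis le_eq_or_size_lt : forall {a b}, le a b -> a = b \/ size a < size b.
Hypothesis join_ubl : forall {a b c}, le a c -> le b c -> le a (join a b).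
Hypothesis join_ubr : forall {a b c}, le a c -> le b c -> le b (join a b).
Hypothesis join_least : forall {a b c}, le a c -> le b c -> le (join a b) c.
Hypothesis bot_le : forall a, le a top -> le bot a.

Let P a := le a top.

Lemma size_le a b : le a b -> size a <= size b.
Proof. by case/le_eq_or_size_lt=> [->|/ltnW]. Qed.

Lemma le_anti a b : le a b -> le b a -> a = b.
Proof.
case/le_eq_or_size_lt=> // lt_ab /le_eq_or_size_lt[] // lt_ba.
by have := ltn_trans lt_ab lt_ba; rewrite ltnn.
Qed.

Lemma ex_glb S : (forall s, S s -> P s) -> exists l, is_glb le P S l.
Proof.
move=> SP; pose L v := P v /\ forall s, S s -> le v s.
have Lbot : L bot by split=> [|s /SP]; apply: bot_le.
have [v [Pv lbv] v_max] := ex_maximizer (fun v (Lv : L v) => size_le Lv.1) Lbot.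
exists v; split=> //; split=> // w Pw lbw.
have Lj : L (join v w).
  by split=> [|s Ss]; [exact: join_least | exact: join_least (lbv s Ss) (lbw s Ss)].
have [-> | lt_vj] := le_eq_or_size_lt (join_ubl Pv Pw); first exact: join_ubr Pv Pw.
by have := v_max _ Lj; rewrite leqNgt lt_vj.
Qed.

Lemma ex_lub S : (forall s, S s -> P s) -> exists u, is_lub le P S u.
Proof.
move=> SP; pose U v := P v /\ forall s, S s -> le s v.
have [u [Pu [lbu glbu]]] := ex_glb (fun v (Uv : U v) => Uv.1).
exists u; split=> //; split=> [s Ss|v Pv ubv]; last exact: lbu.
by apply: glbu => [|v [_ ubv]]; [apply: SP | apply: ubv].
Qed.

Lemma down_set_complete_lattice : complete_lattice le P.
Proof.
split=> [a _ //|a b _ _|a b c _ _ _|S SP]; [exact: le_anti | exact: le_trans |].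
by split; [apply: ex_lub | apply: ex_glb].
Qed.

End SizeBoundedCompleteLattice.

Scheme expr_comp_ind := Induction for expr Sort Prop
  with comp_expr_ind := Induction for Defs.comp Sort Prop.
Combined Scheme expr_comp_mutind from expr_comp_ind, comp_expr_ind.
Scheme ele_cle_ind := Induction for ele Sort Prop
  with cle_ele_ind := Induction for cle Sort Prop.
Combined Scheme ele_cle_mutind from ele_cle_ind, cle_ele_ind.

Lemma ele_cle_refl : (forall e, ele e e) /\ (forall M, cle M M).
Proof. by apply: expr_comp_mutind => *; constructor. Qed.

Lemma ele_refl e : ele e e. Proof. exact: ele_cle_refl.1. Qed.
Lemma cle_refl M : cle M M. Proof. exact: ele_cle_refl.2. Qed.

#[local] Hint Constructors ele cle tle : prefix.
#[local] Hint Resolve ele_refl cle_refl : prefix.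

Ltac solve_by_hints := solve [eauto with prefix].

(* [writes] and [toutcome] stay folded so that inverted boxes keep the shape
   [TBox (toutcome c) (writes c)] expected by [tbox_le] and [tle_tbox]. *)
Ltac solve_by_inversion :=
  first [ solve_by_hints
        | match goal with
          | H : ele _ _ |- _ => inversion H; subst; cbn -[writes toutcome]; solve_by_hints
          | H : cle _ _ |- _ => inversion H; subst; cbn -[writes toutcome]; solve_by_hints
          | H : tle _ _ |- _ => inversion H; subst; cbn -[writes toutcome]; solve_by_hints
          end ].

Lemma ele_cle_trans :
  (forall a b, ele a b -> forall c, ele b c -> ele a c) /\
  (forall a b, cle a b -> forall c, cle b c -> cle a c).
Proof. by apply: ele_cle_mutind => *; solve_by_inversion. Qed.

Lemma ele_trans a b c : ele a b -> ele b c -> ele a c.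
Proof. by move=> /ele_cle_trans.1; apply. Qed.
#[local] Hint Resolve ele_trans : prefix.

(* Meaningful only for arguments with a common upper bound; on incompatible
   arguments the left one wins (likewise for [tjoin]). *)
Fixpoint ejoin (a b : expr) : expr :=
  match a, b with
  | EHole, _ => b
  | _, EHole => a
  | EInl a1, EInl b1 => EInl (ejoin a1 b1)
  | EInr a1, EInr b1 => EInr (ejoin a1 b1)
  | EPair a1 a2, EPair b1 b2 => EPair (ejoin a1 b1) (ejoin a2 b2)
  | EFst a1, EFst b1 => EFst (ejoin a1 b1)
  | ESnd a1, ESnd b1 => ESnd (ejoin a1 b1)
  | EFun f x M, EFun _ _ N => EFun f x (cjoin M N)
  | _, _ => a
  end
with cjoin (M N : Defs.comp) : Defs.comp :=
  match M, N with
  | CHole, _ => N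
  | _, CHole => M
  | CReturn e, CReturn e' => CReturn (ejoin e e')
  | CLet M1 x M2, CLet N1 _ N2 => CLet (cjoin M1 N1) x (cjoin M2 N2)
  | CApp e1 e2, CApp e1' e2' => CApp (ejoin e1 e1') (ejoin e2 e2')
  | CCase e x M1 y M2, CCase e' _ N1 _ N2 =>
      CCase (ejoin e e') x (cjoin M1 N1) y (cjoin M2 N2)
  | CRaise e, CRaise e' => CRaise (ejoin e e')
  | CTry M1 x M2, CTry N1 _ N2 => CTry (cjoin M1 N1) x (cjoin M2 N2)
  | CRef e, CRef e' => CRef (ejoin e e')
  | CAssign e1 e2, CAssign e1' e2' => CAssign (ejoin e1 e1') (ejoin e2 e2')
  | CDeref e, CDeref e' => CDeref (ejoin e e')
  | _, _ => M
  end.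

Lemma ejoin_cjoin_ubl :
  (forall a c, ele a c -> forall b, ele b c -> ele a (ejoin a b)) /\
  (forall a c, cle a c -> forall b, cle b c -> cle a (cjoin a b)).
Proof. by apply: ele_cle_mutind => *; solve_by_inversion. Qed.

Lemma ejoin_cjoin_ubr :
  (forall a c, ele a c -> forall b, ele b c -> ele b (ejoin a b)) /\
  (forall a c, cle a c -> forall b, cle b c -> cle b (cjoin a b)).
Proof. by apply: ele_cle_mutind => *; solve_by_inversion. Qed.

Lemma ejoin_cjoin_least :
  (forall a c, ele a c -> forall b, ele b c -> ele (ejoin a b) c) /\
  (forall a c, cle a c -> forall b, cle b c -> cle (cjoin a b) c).
Proof. by apply: ele_cle_mutind => *; solve_by_inversion. Qed.

Lemma ejoin_ubl a b c : ele a c -> ele b c -> ele a (ejoin a b).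
Proof. by move=> /ejoin_cjoin_ubl.1; apply. Qed.
Lemma ejoin_ubr a b c : ele a c -> ele b c -> ele b (ejoin a b).
Proof. by move=> /ejoin_cjoin_ubr.1; apply. Qed.
Lemma ejoin_least a b c : ele a c -> ele b c -> ele (ejoin a b) c.
Proof. by move=> /ejoin_cjoin_least.1; apply. Qed.

#[local] Hint Resolve ejoin_ubl ejoin_ubr ejoin_least : prefix.

Fixpoint esize (e : expr) : nat :=
  match e with
  | EHole => 0
  | EVar _ | EUnit => 1
  | EInl e1 | EInr e1 | EFst e1 | ESnd e1 => (esize e1).+1
  | EPair e1 e2 => (esize e1 + esize e2).+1
  | EFun _ _ M => (csize M).+1
  end
with csize (M : Defs.comp) : nat :=
  match M with
  | CHole => 0
  | CReturn e | CRaise e | CRef e | CDeref e => (esize e).+1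
  | CLet M1 _ M2 | CTry M1 _ M2 => (csize M1 + csize M2).+1
  | CApp e1 e2 | CAssign e1 e2 => (esize e1 + esize e2).+1
  | CCase e _ M1 _ M2 => (esize e + csize M1 + csize M2).+1
  end.

Ltac solve_eq_or_size_lt :=
  repeat match goal with H : _ \/ _ |- _ => case: H => ?; subst end;
  first [ by left
        | by right => /=; lia
        | match goal with |- _ = ?t \/ _ => by case: t => *; [right .. | left] end ].

Lemma ele_cle_eq_or_size_lt :
  (forall a b, ele a b -> a = b \/ esize a < esize b) /\
  (forall a b, cle a b -> a = b \/ csize a < csize b).
Proof. by apply: ele_cle_mutind => *; solve_eq_or_size_lt. Qed.

Lemma tle_refl T : tle T T.
Proof. by elim: T => *; constructor; auto with prefix. Qed.

Lemma tle_writes_toutcome a b :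
  tle a b -> writes a = writes b /\ toutcome a = toutcome b.
Proof. by elim=> //= *; intuition congruence. Qed.

Lemma tbox_le b c : tle b c -> tle (TBox (toutcome c) (writes c)) b.
Proof. by case/tle_writes_toutcome=> <- <-; constructor. Qed.

Lemma tle_tbox a b : tle a b -> tle (TBox (toutcome a) (writes a)) b.
Proof. by case/tle_writes_toutcome=> -> ->; constructor. Qed.

#[local] Hint Resolve tle_refl tbox_le tle_tbox : prefix.

Lemma tle_trans a b c : tle a b -> tle b c -> tle a c.
Proof. by move=> ab; elim: ab c => *; subst; solve_by_inversion. Qed.

Fixpoint tjoin (a b : trace) : trace :=
  match a, b with
  | TBox _ _, _ => b
  | _, TBox _ _ => a
  | TReturn e, TReturn e' => TReturn (ejoin e e')
  | TLetF T, TLetF T' => TLetF (tjoin T T')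
  | TLetS T1 x T2, TLetS T1' _ T2' => TLetS (tjoin T1 T1') x (tjoin T2 T2')
  | TApp e1 e2 f x T, TApp e1' e2' _ _ T' =>
      TApp (ejoin e1 e1') (ejoin e2 e2') f x (tjoin T T')
  | TCaseL e x T y, TCaseL e' _ T' _ => TCaseL (ejoin e e') x (tjoin T T') y
  | TCaseR e x y T, TCaseR e' _ _ T' => TCaseR (ejoin e e') x y (tjoin T T')
  | TRaise e, TRaise e' => TRaise (ejoin e e')
  | TTryS T, TTryS T' => TTryS (tjoin T T')
  | TTryF T1 x T2, TTryF T1' _ T2' => TTryF (tjoin T1 T1') x (tjoin T2 T2')
  | TRef l e, TRef _ e' => TRef l (ejoin e e')
  | TAssign l e1 e2, TAssign _ e1' e2' => TAssign l (ejoin e1 e1') (ejoin e2 e2')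
  | TDeref l e, TDeref _ e' => TDeref l (ejoin e e')
  | _, _ => a
  end.

Lemma tjoin_ubl a b c : tle a c -> tle b c -> tle a (tjoin a b).
Proof. by move=> ac; elim: ac b => *; subst; solve_by_inversion. Qed.
Lemma tjoin_ubr a b c : tle a c -> tle b c -> tle b (tjoin a b).
Proof. by move=> ac; elim: ac b => *; subst; solve_by_inversion. Qed.
Lemma tjoin_least a b c : tle a c -> tle b c -> tle (tjoin a b) c.
Proof. by move=> ac; elim: ac b => *; subst; solve_by_inversion. Qed.

Fixpoint tsize (T : trace) : nat :=
  match T with
  | TBox _ _ => 0
  | TReturn e | TRaise e | TRef _ e | TDeref _ e => (esize e).+1
  | TLetF T1 | TTryS T1 => (tsize T1).+1
  | TLetS T1 _ T2 | TTryF T1 _ T2 => (tsize T1 + tsize T2).+1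
  | TApp e1 e2 _ _ T1 => (esize e1 + esize e2 + tsize T1).+1
  | TCaseL e _ T1 _ | TCaseR e _ _ T1 => (esize e + tsize T1).+1
  | TAssign _ e1 e2 => (esize e1 + esize e2).+1
  end.

Lemma tle_eq_or_tsize_lt a b : tle a b -> a = b \/ tsize a < tsize b.
Proof.
elim=> *; subst;
  repeat match goal with H : ele _ _ |- _ => move/ele_cle_eq_or_size_lt.1: H => H end;
  solve_eq_or_size_lt.
Qed.

Theorem lemma4p1 (T : trace) : complete_lattice tle (Prefix T).
Proof.
exact: (down_set_complete_lattice tle_refl tle_trans tle_eq_or_tsize_lt
          tjoin_ubl tjoin_ubr tjoin_least (@tbox_le ^~ T)).
Qed.
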